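(* Let $\mathbf X=\{X_n\}$ and $\mathbf Y=\{Y_n\}$ be general sources such that $$\inf_{m>0}\ \liminf_{n\to\infty}\ \inf_{c\in\mathbb R}\Big\{\Pr\Big\{\log\tfrac{1}{P_{Y_n}(Y_n)}<c+m\Big\}-\Pr\Big\{\log\tfrac{1}{P_{X_n}(X_n)}<c\Big\}\Big\}\ \ge 0 .$$ Then $$\inf_{0<\epsilon<1}\ \liminf_{n\to\infty}\ \inf_{0\le\delta<1-\epsilon}\{c_n^x(\delta+\epsilon)-c_n^y(\delta)\}\ \ge 0 .$$
   Context: Logarithms are natural. A general source $\mathbf X=\{X_n\}_{n\ge1}$ is a sequence of random variables, $X_n$ taking values in a countable set $\mathcal X_n$, with no consistency requirements between different $n$. Similarly $Y_n$ takes values in a countable set $\mathcal Y_n$. For a random variable $Z$ on a countable set $\mathcal Z$ with pmf $P_Z$, list the elements of positive probability as $z_1,z_2,\dots$ (a finite or countably infinite list) with $P_Z(z_1)\ge P_Z(z_2)\ge\cdots$ (ties broken arbitrarily). Set $\delta_0=0$ and $\delta_k=\sum_{i\le k}P_Z(z_i)$. For $\delta\in[0,1)$ define $c^z(\delta)=\log\frac{1}{P_Z(z_k)}$, where $k$ is the unique index with $\delta\in[\delta_{k-1},\delta_k)$. Here $c_n^x$ and $c_n^y$ denote this function built from $P_{X_n}$ and from $P_{Y_n}$ respectively. *)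

From Stdlib Require Import Reals Lra ClassicalEpsilon.
Open Scope R_scope.

(* A pmf on a countable alphabet, encoded (via an injection) in nat. *)
Definition is_pmf (p : nat -> R) : Prop :=
  (forall k, 0 <= p k) /\ infinite_sum p 1.

Definition series_sum (f : nat -> R) : R :=
  epsilon (inhabits 0) (fun l => infinite_sum f l).

(* Pr{ log (1 / P_Z(Z)) < c } for Z with pmf p. Elements with P_Z = 0
   have infinite self-information and never count. *)
Definition prob_info_lt (p : nat -> R) (c : R) : R :=
  series_sum (fun k =>
    if Rlt_dec 0 (p k) then
      if Rlt_dec (ln (1 / p k)) c then p k else 0
    else 0).

(* Index i is within a list of length len (None = countably infinite). *)
Definition in_len (len : option nat) (i : nat) : Prop :=
  match len with None => True | Some L => (i < L)%nat end.

(* Indices are 0-based: z i is z_{i+1} of the paper. *)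
Definition sorted_enum (p : nat -> R) (len : option nat) (z : nat -> nat) : Prop :=
  (forall i j, in_len len i -> in_len len j -> z i = z j -> i = j) /\
  (forall i, in_len len i -> 0 < p (z i)) /\
  (forall x, 0 < p x -> exists i, in_len len i /\ z i = x) /\
  (forall i j, in_len len i -> in_len len j -> (i < j)%nat -> p (z j) <= p (z i)).

Fixpoint psum (p : nat -> R) (z : nat -> nat) (k : nat) : R :=
  match k with O => 0 | S k' => psum p z k' + p (z k') end.

(* c^z(delta) = log (1 / P(z_k)) with delta in [delta_{k-1}, delta_k)
   (0-based: psum k <= delta < psum (k+1)). *)
Definition cfun (p : nat -> R) (len : option nat) (z : nat -> nat) (delta : R) : R :=
  epsilon (inhabits 0) (fun c => exists k, in_len len k /\
      psum p z k <= delta < psum p z (S k) /\ c = ln (1 / p (z k))).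

(* Fix eps, eta > 0 and apply the hypothesis with margin m = eta and
   tolerance eps.  For delta in [0, 1 - eps) write
     c^x(delta + eps) = log 1/P_X(x_k)  with  delta + eps < delta^X_{k+1},
     c^y(delta)       = log 1/P_Y(y_j)  with  delta^Y_j <= delta.
   If c^x(delta + eps) < c^y(delta) - eta, then with c := c^y(delta) - eta
     Pr{iX < c}       >= delta^X_{k+1} > delta + eps   (x_0..x_k all count),
     Pr{iY < c + eta} <= delta^Y_j     <= delta        (only y_0..y_{j-1} count),
   contradicting  Pr{iY < c + eta} - Pr{iX < c} >= -eps. *)

From Stdlib Require Import Reals Lra Lia List ClassicalEpsilon.
Open Scope R_scope.

Definition lsum (g : nat -> R) (l : list nat) : R :=
  fold_right (fun x acc => g x + acc) 0 l.

Lemma lsum_app g l1 l2 : lsum g (l1 ++ l2) = lsum g l1 + lsum g l2.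
Proof. induction l1 as [|a l1 IH]; simpl; [lra|]. rewrite IH. lra. Qed.

Lemma lsum_nonneg g l : (forall x, 0 <= g x) -> 0 <= lsum g l.
Proof. intros Hg. induction l as [|a l IH]; simpl; [lra|]. specialize (Hg a). lra. Qed.

Lemma lsum_le g h l : (forall x, In x l -> g x <= h x) -> lsum g l <= lsum h l.
Proof.
  induction l as [|a l IH]; simpl; intros H; [lra|].
  assert (g a <= h a) by auto.
  assert (lsum g l <= lsum h l) by auto.
  lra.
Qed.

Lemma lsum_sub g l1 l2 : (forall x, 0 <= g x) -> NoDup l1 ->
  (forall x, In x l1 -> g x <> 0 -> In x l2) -> lsum g l1 <= lsum g l2.
Proof.
  revert l2. induction l1 as [|a l1 IH]; intros l2 Hg Hnd Hin; simpl.
  { apply lsum_nonneg; auto. }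
  inversion Hnd as [|? ? Ha_notin Hnd1]; subst.
  destruct (Req_dec (g a) 0) as [Hga|Hga].
  - rewrite Hga.
    assert (lsum g l1 <= lsum g l2) by (apply IH; auto; intros; apply Hin; simpl; auto).
    lra.
  - assert (Ha : In a l2) by (apply Hin; simpl; auto).
    destruct (in_split _ _ Ha) as [u [v ->]].
    assert (Hrest : lsum g l1 <= lsum g (u ++ v)).
    { apply IH; auto. intros x Hx Hgx.
      assert (Hx2 : In x (u ++ a :: v)) by (apply Hin; simpl; auto).
      apply in_app_or in Hx2. apply in_or_app.
      destruct Hx2 as [?|[?|?]]; auto. subst; contradiction. }
    rewrite lsum_app in Hrest |- *. simpl. lra.
Qed.

Lemma sum_f_R0_lsum f n : sum_f_R0 f n = lsum f (seq 0 (S n)).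
Proof.
  induction n as [|n IH]; [simpl; lra|].
  rewrite seq_S, lsum_app. simpl sum_f_R0. rewrite IH. simpl. lra.
Qed.

Lemma psum_lsum p z k : psum p z k = lsum p (map z (seq 0 k)).
Proof.
  induction k as [|k IH]; [simpl; lra|].
  rewrite seq_S, map_app, lsum_app. simpl psum. rewrite IH. simpl. lra.
Qed.

Lemma cv_le_bound (u : nat -> R) l B : Un_cv u l -> (forall n, u n <= B) -> l <= B.
Proof.
  intros Hc Hb. destruct (Rle_dec l B) as [|Hn]; auto.
  destruct (Hc (l - B)) as [N HN]; [lra|].
  specialize (HN N (le_n _)). specialize (Hb N). unfold R_dist in HN.
  apply Rabs_def2 in HN. lra.
Qed.

Lemma le_list_max x l : In x l -> (x <= list_max l)%nat.
Proof.
  intros Hx. pose proof (proj1 (list_max_le l (list_max l)) (le_n _)) as Hall.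
  rewrite Forall_forall in Hall. auto.
Qed.

Section DominatedSeries.

Variables (p f : nat -> R).
Hypothesis Hp : is_pmf p.
Hypothesis Hf : forall x, 0 <= f x <= p x.

Lemma f_nonneg x : 0 <= f x.
Proof. apply Hf. Qed.

Lemma series_sum_spec : infinite_sum f (series_sum f).
Proof.
  unfold series_sum. apply epsilon_spec.
  destruct (Rseries_CV_comp f p Hf (exist _ 1 (proj2 Hp))) as [l Hl].
  exists l. exact Hl.
Qed.

Lemma lsum_le_series_sum l : NoDup l -> lsum f l <= series_sum f.
Proof.
  intros Hnd.
  apply Rle_trans with (sum_f_R0 f (list_max l)).
  - rewrite sum_f_R0_lsum. apply lsum_sub; auto using f_nonneg.
    intros x Hx _. apply in_seq. pose proof (le_list_max x l Hx). lia.
  - apply sum_incr; [exact series_sum_spec | exact f_nonneg].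
Qed.

Lemma series_sum_le_lsum l : (forall x, f x <> 0 -> In x l) ->
  series_sum f <= lsum f l.
Proof.
  intros Hsupp. apply (cv_le_bound _ _ _ series_sum_spec). intro N.
  rewrite sum_f_R0_lsum. apply lsum_sub; auto using f_nonneg, seq_NoDup.
Qed.

End DominatedSeries.

Lemma self_info_lt_iff a b : 0 < a -> 0 < b -> ln (1 / a) < ln (1 / b) <-> b < a.
Proof.
  intros Ha Hb. unfold Rdiv. rewrite !Rmult_1_l, !ln_Rinv by assumption.
  split; intros H.
  - apply ln_lt_inv; auto. lra.
  - pose proof (ln_increasing _ _ Hb H). lra.
Qed.

Lemma find_interval (s : nat -> R) K d : s 0%nat <= d -> d < s K ->
  exists k, (k < K)%nat /\ s k <= d < s (S k).
Proof.
  induction K as [|K IH]; intros H0 HK; [lra|].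
  destruct (Rle_dec (s K) d) as [HsK|HsK].
  - exists K. split; [lia | lra].
  - destruct IH as [k [Hk Hint]]; [assumption | lra |].
    exists k. split; [lia | assumption].
Qed.

Lemma in_len_down len i j : in_len len i -> (j <= i)%nat -> in_len len j.
Proof. destruct len; simpl; auto; lia. Qed.

Definition info_mass (p : nat -> R) (c : R) (x : nat) : R :=
  if Rlt_dec 0 (p x) then if Rlt_dec (ln (1 / p x)) c then p x else 0 else 0.

Lemma prob_info_lt_series p c : prob_info_lt p c = series_sum (info_mass p c).
Proof. reflexivity. Qed.

Section SortedEnumeration.

Variables (p : nat -> R) (len : option nat) (z : nat -> nat).
Hypothesis Hp : is_pmf p.
Hypothesis Hz : sorted_enum p len z.

Lemma info_mass_dom c x : 0 <= info_mass p c x <= p x.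
Proof.
  pose proof (proj1 Hp x). unfold info_mass.
  destruct (Rlt_dec 0 (p x)); [destruct (Rlt_dec (ln (1 / p x)) c)|]; lra.
Qed.

Lemma enum_prefix_nodup K : (forall i, (i < K)%nat -> in_len len i) ->
  NoDup (map z (seq 0 K)).
Proof.
  intros HK. destruct Hz as [Hinj _].
  apply NoDup_map_NoDup_ForallPairs; [|apply seq_NoDup].
  intros a b Ha Hb E. apply in_seq in Ha, Hb. apply Hinj; auto; apply HK; lia.
Qed.

Lemma enum_prefix_covers N : exists K,
  (forall i, (i < K)%nat -> in_len len i) /\
  (forall x, (x <= N)%nat -> 0 < p x -> In x (map z (seq 0 K))).
Proof.
  destruct Hz as [_ [_ [Hsur _]]].
  induction N as [|N [K [HK Hcov]]].
  - destruct (Rlt_dec 0 (p 0%nat)) as [H|H].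
    + destruct (Hsur _ H) as [i [Hi Hzi]]. exists (S i). split.
      * intros j Hj. apply in_len_down with i; auto; lia.
      * intros x Hx Hpx. replace x with 0%nat by lia. rewrite <- Hzi.
        apply in_map, in_seq. lia.
    + exists 0%nat. split; [intros; lia|].
      intros x Hx Hpx. replace x with 0%nat in Hpx by lia. contradiction.
  - destruct (Rlt_dec 0 (p (S N))) as [H|H].
    + destruct (Hsur _ H) as [i [Hi Hzi]]. exists (Nat.max K (S i)). split.
      * intros j Hj. destruct (Nat.lt_ge_cases j K); auto.
        apply in_len_down with i; auto; lia.
      * intros x Hx Hpx. destruct (Nat.eq_dec x (S N)) as [->|Hne].
        -- rewrite <- Hzi. apply in_map, in_seq. lia.
        -- destruct (proj1 (in_map_iff _ _ _) (Hcov x ltac:(lia) Hpx)) as [j [Hzj Hj]].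
           rewrite <- Hzj. apply in_seq in Hj. apply in_map, in_seq. lia.
    + exists K. split; auto. intros x Hx Hpx.
      destruct (Nat.eq_dec x (S N)) as [->|Hne]; [contradiction|].
      apply Hcov; auto; lia.
Qed.

Lemma psum_exceeds t : t < 1 ->
  exists K, (forall i, (i < K)%nat -> in_len len i) /\ t < psum p z K.
Proof.
  intros Ht. destruct Hp as [Hp0 Hp1].
  destruct (Hp1 (1 - t)) as [N HN]; [lra|].
  specialize (HN N (le_n _)). unfold R_dist in HN. apply Rabs_def2 in HN.
  destruct (enum_prefix_covers N) as [K [HK Hcov]].
  exists K. split; auto.
  apply Rlt_le_trans with (sum_f_R0 p N); [lra|].
  rewrite sum_f_R0_lsum, psum_lsum. apply lsum_sub; auto using seq_NoDup.
  intros x Hx Hpx. apply in_seq in Hx. apply Hcov; [lia|].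
  specialize (Hp0 x). lra.
Qed.

Lemma cfun_spec d : 0 <= d < 1 ->
  exists k, in_len len k /\ psum p z k <= d < psum p z (S k) /\
    cfun p len z d = ln (1 / p (z k)).
Proof.
  intros Hd. unfold cfun.
  match goal with |- context [epsilon ?i ?P] => assert (HE : exists c, P c) end.
  { destruct (psum_exceeds d) as [K [HK Hd1]]; [lra|].
    destruct (find_interval (psum p z) K d) as [k [Hk Hint]]; simpl; [lra | assumption |].
    exists (ln (1 / p (z k))), k. auto. }
  destruct (epsilon_spec (inhabits 0) _ HE) as [k [Hk [Hint Hc]]]. eauto.
Qed.

(* Only z_0, ..., z_{j-1} can have self-information below that of z_j. *)
Lemma prob_info_lt_le_psum j : in_len len j ->
  prob_info_lt p (ln (1 / p (z j))) <= psum p z j.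
Proof.
  intros Hj. destruct Hz as [_ [Hpos [Hsur Hsort]]].
  rewrite prob_info_lt_series, psum_lsum.
  apply Rle_trans with (lsum (info_mass p (ln (1 / p (z j)))) (map z (seq 0 j))).
  - apply series_sum_le_lsum with p; auto using info_mass_dom.
    intros x Hx. unfold info_mass in Hx.
    destruct (Rlt_dec 0 (p x)) as [Hpx|]; [|lra].
    destruct (Rlt_dec (ln (1 / p x)) (ln (1 / p (z j)))) as [Hlt|]; [|lra].
    apply (self_info_lt_iff _ _ Hpx (Hpos j Hj)) in Hlt.
    destruct (Hsur x Hpx) as [i [Hi <-]].
    apply in_map, in_seq. destruct (Nat.lt_ge_cases i j) as [|Hij]; [lia|].
    exfalso. destruct (Nat.eq_dec i j) as [->|Hne]; [lra|].
    assert (p (z i) <= p (z j)) by (apply Hsort; auto; lia). lra.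
  - apply lsum_le. intros; apply info_mass_dom.
Qed.

(* If z_k has self-information below c, so do z_0, ..., z_k. *)
Lemma psum_le_prob_info_lt k c : in_len len k -> ln (1 / p (z k)) < c ->
  psum p z (S k) <= prob_info_lt p c.
Proof.
  intros Hk Hc.
  assert (Hpre : forall i, (i < S k)%nat -> in_len len i)
    by (intros; apply in_len_down with k; auto; lia).
  pose proof (enum_prefix_nodup (S k) Hpre) as Hnd.
  destruct Hz as [_ [Hpos [_ Hsort]]].
  rewrite prob_info_lt_series, psum_lsum.
  apply Rle_trans with (lsum (info_mass p c) (map z (seq 0 (S k)))).
  - apply lsum_le. intros x Hx. apply in_map_iff in Hx. destruct Hx as [i [<- Hi]].
    apply in_seq in Hi.
    assert (Hpi : p (z k) <= p (z i)).
    { destruct (Nat.eq_dec i k) as [->|Hne]; [lra|]. apply Hsort; [apply Hpre; lia | exact Hk | lia]. }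
    assert (Hpk := Hpos k Hk).
    unfold info_mass.
    destruct (Rlt_dec 0 (p (z i))) as [_|]; [|lra].
    destruct (Rlt_dec (ln (1 / p (z i))) c) as [|Hge]; [lra|].
    exfalso. apply Hge.
    assert (Hinfo : ~ ln (1 / p (z k)) < ln (1 / p (z i)))
      by (rewrite self_info_lt_iff; lra).
    lra.
  - apply lsum_le_series_sum with p; auto using info_mass_dom.
Qed.

End SortedEnumeration.

Theorem lemma7
  (PX PY : nat -> nat -> R)
  (lenX lenY : nat -> option nat) (zX zY : nat -> nat -> nat)
  (hPX : forall n, is_pmf (PX n)) (hPY : forall n, is_pmf (PY n))
  (hzX : forall n, sorted_enum (PX n) (lenX n) (zX n))
  (hzY : forall n, sorted_enum (PY n) (lenY n) (zY n))
  (* inf_{m>0} liminf_n inf_c { Pr{iY < c+m} - Pr{iX < c} } >= 0 *)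
  (hyp : forall m, 0 < m -> forall eta, 0 < eta ->
     exists N, forall n, (N <= n)%nat -> forall c : R,
       prob_info_lt (PY n) (c + m) - prob_info_lt (PX n) c >= - eta) :
  (* inf_{0<eps<1} liminf_n inf_{0<=delta<1-eps} { c^x_n(delta+eps) - c^y_n(delta) } >= 0 *)
  forall eps, 0 < eps < 1 -> forall eta, 0 < eta ->
    exists N, forall n, (N <= n)%nat -> forall delta : R, 0 <= delta < 1 - eps ->
      cfun (PX n) (lenX n) (zX n) (delta + eps) - cfun (PY n) (lenY n) (zY n) delta >= - eta.
Proof.
  intros eps Heps eta Heta.
  destruct (hyp eta Heta eps (proj1 Heps)) as [N HN].
  exists N. intros n Hn delta Hd.
  destruct (cfun_spec _ _ _ (hPX n) (hzX n) (delta + eps)) as [k [Hk [Hint_x ->]]]; [lra|].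
  destruct (cfun_spec _ _ _ (hPY n) (hzY n) delta) as [j [Hj [Hint_y ->]]]; [lra|].
  set (cy := ln (1 / PY n (zY n j))).
  destruct (Rge_dec (ln (1 / PX n (zX n k)) - cy) (- eta)) as [|Hlt]; [assumption|].
  exfalso.
  specialize (HN n Hn (cy - eta)). replace (cy - eta + eta) with cy in HN by ring.
  pose proof (prob_info_lt_le_psum _ _ _ (hPY n) (hzY n) j Hj) as HY.
  pose proof (psum_le_prob_info_lt _ _ _ (hPX n) (hzX n) k (cy - eta) Hk ltac:(lra)) as HX.
  fold cy in HY. lra.
Qed.
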